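(* Let $p>3$ be a prime and $f:V_n^{(p)}\to\mathbb{F}_p$ a function with $f(0)=0$. Suppose that for every $a\in\mathbb{F}_p^*$ there is an even integer $l_a$ with $2\le l_a\le p-1$ such that $f(ax)=a^{l_a}f(x)$ for all $x\in V_n^{(p)}$. Then the defining-set codes $\mathcal{C}_{D_{f,0}\setminus\{0\}}$, $\mathcal{C}_{D_{f,sq}}$ and $\mathcal{C}_{D_{f,nsq}}$ are self-orthogonal.
   Context: $V_n^{(p)}$ is an $n$-dimensional $\mathbb{F}_p$-vector space with a non-degenerate symmetric bilinear form $\langle\cdot,\cdot\rangle_n$; $\mathbb{F}_p^*=\mathbb{F}_p\setminus\{0\}$; $SQ$ and $NSQ$ are the nonzero squares and nonsquares of $\mathbb{F}_p$. $D_{f,0}=\{x:f(x)=0\}$, $D_{f,sq}=\{x:f(x)\in SQ\}$, $D_{f,nsq}=\{x:f(x)\in NSQ\}$. For $D=\{x_1,\dots,x_m\}\subseteq V_n^{(p)}$, $\mathcal{C}_D=\{(\langle a,x_1\rangle_n,\dots,\langle a,x_m\rangle_n):a\in V_n^{(p)}\}$. A linear code is self-orthogonal if $\mathcal{C}\subseteq\mathcal{C}^\perp$ with respect to the standard dot product. *)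

From HB Require Import structures.
From mathcomp Require Import all_boot all_order all_algebra.
Set Implicit Arguments. Unset Strict Implicit. Unset Printing Implicit Defensive.
Import GRing.Theory.
Local Open Scope ring_scope.

Section Defs.
Variables (p n : nat).

(* V_n^(p) = 'rV['F_p]_n; a symmetric bilinear form is given by a
   (symmetric, invertible = non-degenerate) Gram matrix M:
   <x, y>_n = x M y^T. *)
Definition bform (M : 'M['F_p]_n) (x y : 'rV['F_p]_n) : 'F_p :=
  (x *m M *m y^T) 0 0.

Definition nondeg_sym_form (M : 'M['F_p]_n) : Prop :=
  M^T = M /\ M \in unitmx.

Definition SQ : {set 'F_p} :=
  [set y : 'F_p | (y != 0) && [exists z : 'F_p, z ^+ 2 == y]].
Definition NSQ : {set 'F_p} :=
  [set y : 'F_p | (y != 0) && ~~ [exists z : 'F_p, z ^+ 2 == y]].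

Definition D_f0 (f : 'rV['F_p]_n -> 'F_p) : {set 'rV['F_p]_n} :=
  [set x | f x == 0].
Definition D_fsq (f : 'rV['F_p]_n -> 'F_p) : {set 'rV['F_p]_n} :=
  [set x | f x \in SQ].
Definition D_fnsq (f : 'rV['F_p]_n -> 'F_p) : {set 'rV['F_p]_n} :=
  [set x | f x \in NSQ].

Definition defcode (M : 'M['F_p]_n) (D : {set 'rV['F_p]_n})
  : {set 'rV['F_p]_#|D|} :=
  [set \row_(i < #|D|) bform M a (enum_val i) | a : 'rV['F_p]_n].

End Defs.

Definition self_orthogonal (q m : nat) (C : {set 'rV['F_q]_m}) : Prop :=
  forall c c', c \in C -> c' \in C -> \sum_(i < m) c 0 i * c' 0 i = 0.

From HB Require Import structures.
From mathcomp Require Import all_boot all_order all_algebra.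
Set Implicit Arguments. Unset Strict Implicit. Unset Printing Implicit Defensive.
Import GRing.Theory.
Local Open Scope ring_scope.

(* The dot product of the codewords of C_D given by a and b is the sum over D
   of the quadratic form x |-> <a,x><b,x>.  If D is stable under x |-> 2x,
   reindexing that sum along x |-> 2x multiplies it by 4, so 3 times the sum
   vanishes, and 3 is a unit for p > 3.  The three defining sets are stable
   under doubling because f(2x) = (2^(l/2))^2 f(x) with l = l_2 even, and
   multiplying by a nonzero square preserves being zero, a square, or a
   nonsquare. *)

Lemma sum_eq0_of_scaling (F : fieldType) (T : finType) (D : {pred T})
    (s : T -> T) (k : F) (g : T -> F) :
  injective s -> {mono s : x / x \in D} ->
  (forall x, g (s x) = k * g x) -> k != 1 ->
  \sum_(x in D) g x = 0.
Proof.
move=> s_inj sD gs k_neq1.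
set S := \sum_(x in D) g x.
have SkS : S = k * S.
  rewrite /S mulr_sumr (reindex_inj s_inj) /=.
  by apply: eq_big => [x | x _]; rewrite ?sD ?gs.
have /eqP : (k - 1) * S = 0 by rewrite mulrBl -SkS mul1r subrr.
by rewrite mulf_eq0 subr_eq0 (negPf k_neq1) => /eqP.
Qed.

Section DefiningSetCodes.
Variables (p n : nat) (M : 'M['F_p]_n).

Lemma bformZr a k (x : 'rV['F_p]_n) : bform M a (k *: x) = k * bform M a x.
Proof. by rewrite /bform linearZ /= -scalemxAr mxE. Qed.

Lemma self_orthogonal_defcode (D : {set 'rV['F_p]_n}) :
  (forall a b, \sum_(x in D) bform M a x * bform M b x = 0) ->
  self_orthogonal (defcode M D).
Proof.
move=> sum_eq0 c c' /imsetP [a _ ->] /imsetP [b _ ->].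
under eq_bigr do rewrite !mxE.
by rewrite -(big_enum_val (fun x => bform M a x * bform M b x)).
Qed.

Lemma self_orthogonal_defcode_scale_stable (D : {set 'rV['F_p]_n}) (c : 'F_p) :
  c != 0 -> c ^+ 2 != 1 -> {mono *:%R c : x / x \in D} ->
  self_orthogonal (defcode M D).
Proof.
move=> c_neq0 c2_neq1 cD; apply: self_orthogonal_defcode => a b.
apply: (sum_eq0_of_scaling (scalerI c_neq0) cD _ c2_neq1) => x.
by rewrite !bformZr mulrACA.
Qed.

End DefiningSetCodes.

Section Squares.
Variable p : nat.

Lemma is_square_mulsq (s y : 'F_p) : s != 0 ->
  [exists z, z ^+ 2 == s ^+ 2 * y] = [exists z, z ^+ 2 == y].
Proof.
move=> s_neq0; apply/existsP/existsP => -[z /eqP z2].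
  by exists (z / s); rewrite expr_div_n z2 mulrC mulKf ?expf_neq0.
by exists (s * z); rewrite exprMn z2.
Qed.

Lemma mulsq_eq0 (s y : 'F_p) : s != 0 -> (s ^+ 2 * y == 0) = (y == 0).
Proof. by move=> s_neq0; rewrite mulf_eq0 (negPf (expf_neq0 _ s_neq0)). Qed.

Lemma SQ_mulsq (s y : 'F_p) : s != 0 -> (s ^+ 2 * y \in SQ p) = (y \in SQ p).
Proof. by move=> s_neq0; rewrite !inE mulsq_eq0 ?is_square_mulsq. Qed.

Lemma NSQ_mulsq (s y : 'F_p) : s != 0 -> (s ^+ 2 * y \in NSQ p) = (y \in NSQ p).
Proof. by move=> s_neq0; rewrite !inE mulsq_eq0 ?is_square_mulsq. Qed.

End Squares.

Section LevelSets.
Variables (p n : nat) (f : 'rV['F_p]_n -> 'F_p) (c s : 'F_p).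
Hypotheses (c_neq0 : c != 0) (s_neq0 : s != 0).
Hypothesis f_scale : forall x, f (c *: x) = s ^+ 2 * f x.

Lemma D_f0_scale_stable : {mono *:%R c : x / x \in D_f0 f :\ 0}.
Proof.
by move=> x; rewrite !inE f_scale mulsq_eq0 // scaler_eq0 (negPf c_neq0).
Qed.

(* The predicate of [in_set] is given explicitly: otherwise it also unfolds
   the set [SQ p], and [SQ_mulsq] no longer applies. *)
Lemma D_fsq_scale_stable : {mono *:%R c : x / x \in D_fsq f}.
Proof.
by move=> x; rewrite !(in_set (fun y => f y \in SQ p)) f_scale SQ_mulsq.
Qed.

Lemma D_fnsq_scale_stable : {mono *:%R c : x / x \in D_fnsq f}.
Proof.
by move=> x; rewrite !(in_set (fun y => f y \in NSQ p)) f_scale NSQ_mulsq.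
Qed.

End LevelSets.

Lemma Fp_natr_neq0 (p k : nat) :
  prime p -> (0 < k < p)%N -> (k%:R : 'F_p) != 0.
Proof.
move=> p_pr /andP [k_gt0 k_ltp]; rewrite -(dvdn_pcharf (pchar_Fp p_pr)).
by apply/negP => /(dvdn_leq k_gt0); rewrite leqNgt k_ltp.
Qed.

Theorem lemma14 (p n : nat) (M : 'M['F_p]_n) (f : 'rV['F_p]_n -> 'F_p) :
  prime p -> (3 < p)%N -> nondeg_sym_form M ->
  f 0 = 0 ->
  (forall a : 'F_p, a != 0 ->
     exists l : nat, [/\ ~~ odd l, (2 <= l)%N, (l <= p.-1)%N &
       forall x : 'rV['F_p]_n, f (a *: x) = a ^+ l * f x]) ->
  [/\ self_orthogonal (defcode M (D_f0 f :\ 0)),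
      self_orthogonal (defcode M (D_fsq f)) &
      self_orthogonal (defcode M (D_fnsq f))].
Proof.
move=> p_pr p_gt3 _ _ f_hom.
have two_neq0 : (2%:R : 'F_p) != 0.
  by apply: Fp_natr_neq0 => //=; apply: ltn_trans p_gt3.
have four_neq1 : (2%:R : 'F_p) ^+ 2 != 1.
  by rewrite -subr_eq0 -natrX -[1]/(1%:R) -natrB // Fp_natr_neq0.
have [l [l_even _ _ f_l]] := f_hom _ two_neq0.
set s : 'F_p := 2%:R ^+ l./2.
have s_neq0 : s != 0 by rewrite expf_neq0.
have f_double x : f (2%:R *: x) = s ^+ 2 * f x.
  by rewrite f_l -exprM -{1}(odd_double_half l) (negPf l_even) -muln2.
split; apply: (self_orthogonal_defcode_scale_stable two_neq0 four_neq1).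
- exact: D_f0_scale_stable two_neq0 s_neq0 f_double.
- exact: D_fsq_scale_stable s_neq0 f_double.
- exact: D_fnsq_scale_stable s_neq0 f_double.
Qed.
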